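(* Let $G=(V,E)$ be a finite, undirected, connected graph with unit edge weights and vertex set $V=\{v_1,\dots,v_N\}$, and let $L=D-A$ be its graph Laplacian. Let $\phi_{\lambda_1},\dots,\phi_{\lambda_N}$ be an orthonormal basis of $\mathbb{C}^N$ consisting of eigenvectors of $L$. For $t\ge 0$ let $H_t=e^{-tL}$, let $D_i(t)=\operatorname{diag}(H_t(\cdot,v_i))$, and let $\psi_{ij}(t)=D_i(t)\phi_{\lambda_j}$ for $i,j\in\{1,\dots,N\}$. Then for every $t\ge 0$ the family $\{\psi_{ij}(t)\}_{i,j=1}^N$ is a frame for $\mathbb{C}^N$, and its frame operator $S(t)=\sum_{i,j=1}^N \psi_{ij}(t)\psi_{ij}(t)^*$ is the diagonal matrix $$S(t)=\sum_{i=1}^N D_i(t)^2.$$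
   Context: The graph Laplacian acts by $Lf(v)=\sum_{u\sim v}(f(v)-f(u))$; in matrix form $L=D-A$ with $A$ the adjacency matrix and $D$ the diagonal degree matrix. $\mathbb{C}^N$ is identified with functions on $V$ with the inner product $\langle f,g\rangle=\sum_{v\in V}f(v)\overline{g(v)}$. $H_t(\cdot,v_i)$ denotes the $i$-th column of $H_t$, and $\operatorname{diag}(x)$ is the diagonal matrix with diagonal entries $x$. A family $\{\psi_k\}$ is a frame for $\mathbb{C}^N$ if there exist $0<A\le B$ with $A\|f\|^2\le\sum_k|\langle f,\psi_k\rangle|^2\le B\|f\|^2$ for all $f\in\mathbb{C}^N$. *)

From HB Require Import structures.
From mathcomp Require Import all_boot all_order all_algebra.
From mathcomp Require Import all_classical all_reals all_analysis.
From mathcomp Require Import complex.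
Set Implicit Arguments. Unset Strict Implicit. Unset Printing Implicit Defensive.
Import Order.TTheory GRing.Theory Num.Theory numFieldNormedType.Exports.
Local Open Scope ring_scope.

Definition simple_graph (N : nat) (adj : rel 'I_N) : Prop :=
  (forall u, ~~ adj u u) /\ (forall u v, adj u v = adj v u).

Definition connected_graph (N : nat) (adj : rel 'I_N) : Prop :=
  forall u v, connect adj u v.

Definition laplacian (R : pzRingType) (N : nat) (adj : rel 'I_N) : 'M[R]_N :=
  \matrix_(u, v) ((if u == v then #|[set w | adj u w]|%:R else 0)
                  - (adj u v)%:R).

Definition mx_exp (R : realType) (N : nat) (M : 'M[R]_N) : 'M[R]_N :=
  \matrix_(i, j) limn (fun n : nat =>
      (\sum_(k < n) (k`!%:R)^-1 *: (M ^+ k)) i j).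

Definition heat_kernel (R : realType) (N : nat) (adj : rel 'I_N) (t : R)
  : 'M[R]_N := mx_exp (- t *: laplacian R adj).

Definition rc (R : rcfType) (x : R) : R[i] := (x%:C)%C.

Definition cinner (R : rcfType) (N : nat) (f g : 'cV[R[i]]_N) : R[i] :=
  \sum_(v < N) f v 0 * (g v 0)^*.

Definition Dmat (R : realType) (N : nat) (adj : rel 'I_N) (t : R) (i : 'I_N)
  : 'M[R[i]]_N :=
  diag_mx (\row_v (rc (heat_kernel adj t v i))).

Definition psi (R : realType) (N : nat) (adj : rel 'I_N)
  (phi : 'I_N -> 'cV[R[i]]_N) (t : R) (i j : 'I_N) : 'cV[R[i]]_N :=
  Dmat adj t i *m phi j.

Definition adjmx (R : rcfType) (m n : nat) (M : 'M[R[i]]_(m, n)) : 'M[R[i]]_(n, m) :=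
  (map_mx (fun z => z^*) M)^T.

Definition is_frame (R : rcfType) (N : nat) (I : finType) (F : I -> 'cV[R[i]]_N) : Prop :=
  exists A B : R, 0 < A /\ A <= B /\
    forall f : 'cV[R[i]]_N,
      (rc A * cinner f f <= \sum_(k : I) `|cinner f (F k)| ^+ 2) /\
      (\sum_(k : I) `|cinner f (F k)| ^+ 2 <= rc B * cinner f f).

(* Each D_i(t) is a real diagonal matrix, so by Parseval in the orthonormal
   eigenbasis, sum_{i,j} |<f, psi_ij>|^2 = sum_i |D_i f|^2
   = sum_v s(v) |f(v)|^2 with s(v) = sum_i H_t(v, i)^2; hence min s and max s
   are frame bounds as soon as s > 0.  Positivity comes from the diagonal of
   the heat kernel: L is real symmetric, so its eigenvalues are real and
   H_t(v, v) = sum_j exp(-t lam_j) |phi_j(v)|^2 > 0, the weights |phi_j(v)|^2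
   summing to 1.  Finally sum_j phi_j phi_j^* = I turns the frame operator
   sum_{i,j} D_i phi_j (D_i phi_j)^* into sum_i D_i D_i^* = sum_i D_i^2. *)

From HB Require Import structures.
From mathcomp Require Import all_boot all_order all_algebra.
From mathcomp Require Import all_classical all_reals all_analysis.
From mathcomp Require Import complex ring.
Set Implicit Arguments. Unset Strict Implicit. Unset Printing Implicit Defensive.
Import Order.TTheory GRing.Theory Num.Theory numFieldNormedType.Exports.
Local Open Scope ring_scope.

HB.instance Definition _ (R : rcfType) :=
  GRing.RMorphism.copy (@rc R) (real_complex R).

Lemma map_mxXn (R S : pzRingType) (f : {rmorphism R -> S}) n (A : 'M[R]_n) k :
  map_mx f (A ^+ k) = map_mx f A ^+ k.
Proof.
elim: k => [|k IHk]; first by rewrite !expr0 map_mx1.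
by rewrite !exprS -!mulmxE map_mxM IHk.
Qed.

Lemma mulmx_eigenXn (R : comPzRingType) n (A : 'M[R]_n) (v : 'cV_n) a k :
  A *m v = a *: v -> A ^+ k *m v = a ^+ k *: v.
Proof.
move=> Av; elim: k => [|k IHk]; first by rewrite !expr0 mul1mx scale1r.
by rewrite exprS -mulmxE -mulmxA IHk -scalemxAr Av scalerA -exprSr.
Qed.

Definition abs2 {R : rcfType} (z : R[i]) : R :=
  complex.Re z ^+ 2 + complex.Im z ^+ 2.

Lemma abs2_ge0 (R : rcfType) (z : R[i]) : 0 <= abs2 z.
Proof. by rewrite addr_ge0 ?sqr_ge0. Qed.

Section Adjoint.
Variable R : rcfType.

Lemma rcI : injective (@rc R).
Proof. exact: complexI. Qed.

Lemma conj_rc (x : R) : (rc x)^* = rc x.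
Proof. exact: conjc_real. Qed.

Lemma rc_abs2 (z : R[i]) : rc (abs2 z) = z * z^*.
Proof. by rewrite /rc add_Re2_Im2 normCK. Qed.

Lemma adjmx_mul m n p (A : 'M[R[i]]_(m, n)) (B : 'M[R[i]]_(n, p)) :
  adjmx (A *m B) = adjmx B *m adjmx A.
Proof. by rewrite /adjmx map_mxM trmx_mul. Qed.

Lemma adjmx_real m n (A : 'M[R]_(m, n)) :
  adjmx (map_mx (@rc R) A) = map_mx (@rc R) A^T.
Proof. by apply/matrixP => i j; rewrite !mxE conj_rc. Qed.

Lemma mul_col_adjmxE n (f g : 'cV[R[i]]_n) u w :
  (f *m adjmx g) u w = f u 0 * (g w 0)^*.
Proof. by rewrite !mxE big_ord1 !mxE. Qed.

Lemma cinnerE n (f g : 'cV[R[i]]_n) : cinner f g = (adjmx g *m f) 0 0.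
Proof. by rewrite mxE; apply: eq_bigr => v _; rewrite !mxE mulrC. Qed.

Lemma conj_cinner n (f g : 'cV[R[i]]_n) : (cinner f g)^* = cinner g f.
Proof.
rewrite /cinner rmorph_sum; apply: eq_bigr => v _.
by rewrite rmorphM /= conjCK mulrC.
Qed.

Lemma cinner_mulmxr n (A : 'M[R[i]]_n) (f g : 'cV_n) :
  cinner f (A *m g) = cinner (adjmx A *m f) g.
Proof. by rewrite !cinnerE adjmx_mul mulmxA. Qed.

Lemma cinnerZl n (a : R[i]) (f g : 'cV[R[i]]_n) :
  cinner (a *: f) g = a * cinner f g.
Proof. by rewrite /cinner mulr_sumr; apply: eq_bigr => v _; rewrite mxE mulrA. Qed.

Lemma cinnerZr n (a : R[i]) (f g : 'cV[R[i]]_n) :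
  cinner f (a *: g) = a^* * cinner f g.
Proof. by rewrite -conj_cinner cinnerZl rmorphM /= conj_cinner. Qed.

End Adjoint.

Lemma is_frame_weighted (R : rcfType) (N : nat) (I : finType)
    (F : I -> 'cV[R[i]]_N) (s : 'I_N -> R) :
  (forall v, 0 < s v) ->
  (forall f, \sum_k `|cinner f (F k)| ^+ 2
             = \sum_v rc (s v) * (f v 0 * (f v 0)^*)) ->
  is_frame F.
Proof.
move=> s_gt0 frame_sum.
(* The seed 1 keeps A <= B also when N = 0. *)
pose A := \big[Order.min/1]_v s v; pose B := \big[Order.max/1]_v s v.
have A_gt0 : 0 < A.
  by apply: (big_rec (fun x => 0 < x)) => // i x _ hx; rewrite lt_min hx s_gt0.
have A_le1 : A <= 1.
  by apply: (big_rec (fun x => x <= 1)) => // i x _ hx; rewrite ge_min hx orbT.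
have B_ge1 : 1 <= B.
  by apply: (big_rec (fun x => 1 <= x)) => // i x _ hx; rewrite le_max hx orbT.
have A_le v : A <= s v by rewrite /A (bigD1 v) //= ge_min lexx.
have le_B v : s v <= B by rewrite /B (bigD1 v) //= le_max lexx.
exists A, B; split => //; split; first exact: le_trans A_le1 B_ge1.
move=> f; rewrite frame_sum /cinner !mulr_sumr.
have ff_ge0 v : 0 <= f v 0 * (f v 0)^* by rewrite -normCK exprn_ge0.
by split; apply: ler_sum => v _; rewrite ler_wpM2r // /rc lecR.
Qed.

Section OrthonormalBasis.
Variables (R : rcfType) (N : nat) (phi : 'I_N -> 'cV[R[i]]_N).
Hypothesis phi_orthonormal : forall j k, cinner (phi j) (phi k) = (j == k)%:R.

Lemma sum_outer_orthonormal : \sum_j phi j *m adjmx (phi j) = 1%:M.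
Proof.
pose B : 'M[R[i]]_N := \matrix_(u, j) phi j u 0.
have BB : adjmx B *m B = 1%:M.
  apply/matrixP => j k; rewrite !mxE eq_sym -phi_orthonormal /cinner.
  by apply: eq_bigr => v _; rewrite !mxE mulrC.
apply/matrixP => u w; rewrite -(mulmx1C BB) summxE !mxE.
by apply: eq_bigr => j _; rewrite mul_col_adjmxE !mxE.
Qed.

Lemma orthonormal_complete u w :
  \sum_j phi j u 0 * (phi j w 0)^* = (u == w)%:R.
Proof.
by under eq_bigr do rewrite -mul_col_adjmxE; rewrite -summxE sum_outer_orthonormal mxE.
Qed.

Lemma sum_abs2_orthonormal u : \sum_j abs2 (phi j u 0) = 1.
Proof.
apply: rcI; rewrite rmorph_sum rmorph1.
have := orthonormal_complete u u; rewrite eqxx /= mulr1n => <-.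
by apply: eq_bigr => j _; exact: rc_abs2.
Qed.

Lemma parseval f : \sum_j `|cinner f (phi j)| ^+ 2 = cinner f f.
Proof.
have outer j : `|cinner f (phi j)| ^+ 2
    = (adjmx f *m (phi j *m adjmx (phi j)) *m f) 0 0.
  rewrite normCK conj_cinner mulrC !cinnerE [in RHS]mulmxA -[in RHS]mulmxA.
  by rewrite [RHS]mxE big_ord1.
under eq_bigr do rewrite outer.
by rewrite -summxE -mulmx_suml -mulmx_sumr sum_outer_orthonormal mulmx1 cinnerE.
Qed.

Lemma parseval_mulmx (A : 'M[R[i]]_N) f :
  \sum_j `|cinner f (A *m phi j)| ^+ 2 = cinner (adjmx A *m f) (adjmx A *m f).
Proof. by under eq_bigr do rewrite cinner_mulmxr; exact: parseval. Qed.

Lemma eigen_decomposition (A : 'M[R[i]]_N) mu :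
  (forall j, A *m phi j = mu j *: phi j) ->
  A = \sum_j mu j *: (phi j *m adjmx (phi j)).
Proof.
move=> Aphi; rewrite -[A]mulmx1 -sum_outer_orthonormal mulmx_sumr.
by apply: eq_bigr => j _; rewrite mulmxA Aphi scalemxAl.
Qed.

Lemma frame_operator_orthonormal (A : 'M[R[i]]_N) :
  \sum_j (A *m phi j) *m adjmx (A *m phi j) = A *m adjmx A.
Proof.
under eq_bigr do rewrite adjmx_mul mulmxA -[_ *m adjmx (phi _)]mulmxA.
by rewrite -mulmx_suml -mulmx_sumr sum_outer_orthonormal mulmx1.
Qed.

End OrthonormalBasis.

Section RealSymmetric.
Variables (R : rcfType) (N : nat) (M : 'M[R]_N).
Hypothesis M_sym : M^T = M.

Lemma cinner_symmetric (f g : 'cV[R[i]]_N) :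
  cinner (map_mx (@rc R) M *m f) g = cinner f (map_mx (@rc R) M *m g).
Proof. by rewrite cinner_mulmxr adjmx_real M_sym. Qed.

Lemma symmetric_eigenvalue_real (v : 'cV[R[i]]_N) lam :
  cinner v v != 0 -> map_mx (@rc R) M *m v = lam *: v ->
  lam = rc (complex.Re lam).
Proof.
move=> v0 Mv; have lamJ : lam^* = lam.
  by apply: (mulIf v0); rewrite -cinnerZr -Mv -cinner_symmetric Mv cinnerZl.
by rewrite /rc ReJ_add [_^*%C]lamJ; field.
Qed.

Variables (phi : 'I_N -> 'cV[R[i]]_N) (lam : 'I_N -> R[i]).
Hypothesis phi_orthonormal : forall j k, cinner (phi j) (phi k) = (j == k)%:R.
Hypothesis phi_eigen : forall j, map_mx (@rc R) M *m phi j = lam j *: phi j.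

Lemma symmetric_mxXn_diag k u :
  (M ^+ k) u u = \sum_j complex.Re (lam j) ^+ k * abs2 (phi j u 0).
Proof.
have phi_eigenXn j : map_mx (@rc R) M ^+ k *m phi j = lam j ^+ k *: phi j.
  exact: mulmx_eigenXn.
have lam_real j : lam j = rc (complex.Re (lam j)).
  by apply: symmetric_eigenvalue_real (phi_eigen j); rewrite phi_orthonormal eqxx oner_neq0.
apply: rcI.
have -> : rc ((M ^+ k) u u) = map_mx (@rc R) (M ^+ k) u u by rewrite mxE.
rewrite map_mxXn.
rewrite (eigen_decomposition phi_orthonormal phi_eigenXn) summxE rmorph_sum.
apply: eq_bigr => j _.
by rewrite mxE mul_col_adjmxE rmorphM rmorphXn /= rc_abs2 -lam_real.
Qed.

End RealSymmetric.

Section SymmetricExponential.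
Variables (R : realType) (N : nat) (M : 'M[R]_N).
Variables (phi : 'I_N -> 'cV[R[i]]_N) (lam : 'I_N -> R[i]).
Hypothesis M_sym : M^T = M.
Hypothesis phi_orthonormal : forall j k, cinner (phi j) (phi k) = (j == k)%:R.
Hypothesis phi_eigen : forall j, map_mx (@rc R) M *m phi j = lam j *: phi j.

Lemma symmetric_mx_exp_diag u :
  mx_exp M u u = \sum_j expR (complex.Re (lam j)) * abs2 (phi j u 0).
Proof.
have partial_sum n : (\sum_(k < n) (k`!%:R)^-1 *: M ^+ k) u u
    = \sum_j series (exp_coeff (complex.Re (lam j))) n * abs2 (phi j u 0).
  rewrite summxE; under eq_bigr do
    rewrite mxE (symmetric_mxXn_diag M_sym phi_orthonormal phi_eigen) mulr_sumr.
  rewrite exchange_big /=; apply: eq_bigr => j _.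
  rewrite seriesEord mulr_suml; apply: eq_bigr => k _.
  by rewrite exp_coeffE mulrA mulrC mulrA.
rewrite mxE; apply: cvg_lim => //; under eq_fun do rewrite partial_sum.
apply: (cvg_big add_continuous) => // j _; apply: cvgMl.
exact: is_cvg_series_exp_coeff.
Qed.

Lemma symmetric_mx_exp_diag_gt0 u : 0 < mx_exp M u u.
Proof.
have term_ge0 j : 0 <= expR (complex.Re (lam j)) * abs2 (phi j u 0).
  by rewrite mulr_ge0 ?expR_ge0 ?abs2_ge0.
rewrite symmetric_mx_exp_diag lt_def sumr_ge0 ?andbT //.
apply: contra_neq (@oner_neq0 R) => /(psumr_eq0P (fun j _ => term_ge0 j)) term0.
rewrite -(sum_abs2_orthonormal phi_orthonormal u) big1 // => j _.
by move/eqP: (term0 j isT); rewrite mulf_eq0 gt_eqF ?expR_gt0 //= => /eqP.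
Qed.

End SymmetricExponential.

Lemma tr_laplacian (R : pzRingType) (N : nat) (adj : rel 'I_N) :
  (forall u v, adj u v = adj v u) -> (laplacian R adj)^T = laplacian R adj.
Proof.
by move=> adjC; apply/matrixP => u v; rewrite !mxE adjC eq_sym; case: eqP => [->|].
Qed.

Lemma heat_kernel_diag_gt0 (R : realType) (N : nat) (adj : rel 'I_N)
    (phi : 'I_N -> 'cV[R[i]]_N) (lam : 'I_N -> R[i]) (t : R) u :
  (forall u v, adj u v = adj v u) ->
  (forall j k, cinner (phi j) (phi k) = (j == k)%:R) ->
  (forall j, map_mx (@rc R) (laplacian R adj) *m phi j = lam j *: phi j) ->
  0 < heat_kernel adj t u u.
Proof.
move=> adjC phi_orthonormal phi_eigen.
apply: (symmetric_mx_exp_diag_gt0 (lam := fun j => rc (- t) * lam j) _ phi_orthonormal).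
  by rewrite linearZ /= tr_laplacian.
by move=> j; rewrite map_mxZ -scalemxAl phi_eigen scalerA.
Qed.

Section HeatFrame.
Variables (R : realType) (N : nat) (adj : rel 'I_N) (t : R).

Lemma Dmat_real i :
  Dmat adj t i = map_mx (@rc R) (diag_mx (\row_v heat_kernel adj t v i)).
Proof. by rewrite map_diag_mx; congr diag_mx; apply/rowP => v; rewrite !mxE. Qed.

Lemma adjmx_Dmat i : adjmx (Dmat adj t i) = Dmat adj t i.
Proof. by rewrite Dmat_real adjmx_real tr_diag_mx. Qed.

Variable phi : 'I_N -> 'cV[R[i]]_N.
Hypothesis phi_orthonormal : forall j k, cinner (phi j) (phi k) = (j == k)%:R.

Lemma psi_frame_sum f :
  \sum_(k : 'I_N * 'I_N) `|cinner f (psi adj phi t k.1 k.2)| ^+ 2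
  = \sum_v rc (\sum_i heat_kernel adj t v i ^+ 2) * (f v 0 * (f v 0)^*).
Proof.
set H := heat_kernel adj t.
rewrite -(pair_big xpredT xpredT (fun i j => `|cinner f (psi adj phi t i j)| ^+ 2)) /=.
under eq_bigr do rewrite parseval_mulmx // adjmx_Dmat.
rewrite /cinner exchange_big /=; apply: eq_bigr => v _.
rewrite rmorph_sum mulr_suml; apply: eq_bigr => i _.
by rewrite mul_diag_mx !mxE rmorphM /= conj_rc rmorphXn /=; ring.
Qed.

End HeatFrame.

Theorem theorem3p1 (R : realType) (N : nat) (adj : rel 'I_N)
  (Hsimple : simple_graph adj) (Hconn : connected_graph adj)
  (phi : 'I_N -> 'cV[R[i]]_N) (lam : 'I_N -> R[i])
  (Horth : forall j k, cinner (phi j) (phi k) = (j == k)%:R)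
  (Heig : forall j, map_mx (@rc R) (laplacian R adj) *m phi j
                    = lam j *: phi j)
  (t : R) (ht : 0 <= t) :
  is_frame (fun ij : 'I_N * 'I_N => psi adj phi t ij.1 ij.2) /\
  \sum_(i < N) \sum_(j < N) psi adj phi t i j *m adjmx (psi adj phi t i j)
    = \sum_(i < N) Dmat adj t i ^+ 2.
Proof.
have [_ adjC] := Hsimple.
split.
  apply: (is_frame_weighted (s := fun v => \sum_i heat_kernel adj t v i ^+ 2)).
    move=> v; rewrite (bigD1 v) //= ltr_wpDr ?sumr_ge0 // => [i _|].
      exact: sqr_ge0.
    by rewrite exprn_gt0 // (heat_kernel_diag_gt0 _ _ adjC Horth Heig).
  exact: psi_frame_sum.
apply: eq_bigr => i _.
by rewrite (frame_operator_orthonormal Horth) adjmx_Dmat expr2 mulmxE.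
Qed.
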